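(* Let $a,b\in\mathbb{Q}_3$ be nonzero, with $3$-adic valuations $\gamma(a)$ and $\gamma(b)$ (so $|a|_3=3^{-\gamma(a)}$, $|b|_3=3^{-\gamma(b)}$). Suppose one of the following holds: 1) $\gamma(a)=0$ and $\gamma(b)<0$; 2) $\gamma(a)>0$ and $\gamma(b)>0$; 3) $\gamma(a)>0$ and $\gamma(b)<0$; 4) $\gamma(a)<0$ and $\gamma(b)=0$; 5) $\gamma(a)<0$ and $\gamma(b)>0$. Then the equation $x^3+ax=b$ has no solution $x\in\mathbb{Z}_3^*$.
   Context: $\mathbb{Z}_3^*$ denotes the set of $3$-adic units, i.e. $x\in\mathbb{Q}_3$ with $|x|_3=1$. *)

From mathcomp Require Import all_boot all_order all_algebra.
Set Implicit Arguments. Unset Strict Implicit. Unset Printing Implicit Defensive.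
Import Order.TTheory GRing.Theory Num.Theory.
Local Open Scope ring_scope.

Definition p3 (n : nat) : int := (3 ^ n)%N%:Z.

(* A 3-adic integer is represented by a coherent sequence of residues:
   x n is (a representative of) x modulo 3^n. *)
Definition Z3 := nat -> int.

Definition is3adic (x : Z3) : Prop :=
  forall n : nat, (x n.+1 == x n %[mod p3 n])%Z.

Definition z3eq (x y : Z3) : Prop :=
  forall n : nat, (x n == y n %[mod p3 n])%Z.

Definition z3add (x y : Z3) : Z3 := fun n => x n + y n.
Definition z3mul (x y : Z3) : Z3 := fun n => x n * y n.
Definition z3const (c : int) : Z3 := fun _ => c.

Definition z3val (x : Z3) (n : nat) : Prop :=
  (p3 n %| x n)%Z /\ ~~ (p3 n.+1 %| x n.+1)%Z.

(* A 3-adic number num / 3^den, with num a 3-adic integer. *)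
Record Q3 := mkQ3 { q3den : nat ; q3num : Z3 }.

Definition isQ3 (a : Q3) : Prop := is3adic (q3num a).

Definition q3eq (a b : Q3) : Prop :=
  z3eq (z3mul (z3const (p3 (q3den b))) (q3num a))
       (z3mul (z3const (p3 (q3den a))) (q3num b)).

Definition q3add (a b : Q3) : Q3 :=
  mkQ3 (q3den a + q3den b)
       (z3add (z3mul (z3const (p3 (q3den b))) (q3num a))
              (z3mul (z3const (p3 (q3den a))) (q3num b))).

Definition q3mul (a b : Q3) : Q3 :=
  mkQ3 (q3den a + q3den b) (z3mul (q3num a) (q3num b)).

Definition q3val (a : Q3) (g : int) : Prop :=
  exists n : nat, z3val (q3num a) n /\ g = n%:Z - (q3den a)%:Z.

Definition q3unit (x : Q3) : Prop := isQ3 x /\ q3val x 0.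

From mathcomp Require Import all_boot all_order all_algebra.
From mathcomp Require Import zify ring.
Set Implicit Arguments.
Unset Strict Implicit.
Unset Printing Implicit Defensive.
Import Order.TTheory GRing.Theory Num.Theory.
Local Open Scope ring_scope.

(** Clearing denominators, a solution x of x^3 + a x = b gives, modulo a high
    power of 3, a vanishing sum of three integers whose 3-adic valuations are,
    up to a common shift, those of x^3, a x and b, namely 0, gamma(a) and
    gamma(b).  By the ultrametric inequality the smallest of three valuations
    of a vanishing sum is attained at least twice, and the five cases of the
    hypothesis are exactly those in which min(0, gamma(a), gamma(b)) is attained
    only once. *)

Section ExactValuation.

Variable p : nat.
Hypothesis p_prime : prime p.

Definition has_val (k : nat) (y : int) : Prop :=
  exists2 y', y = (p ^ k)%N%:Z * y' & ~~ (p %| y')%Z.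

Lemma expz_neq0 k : (p ^ k)%N%:Z != 0.
Proof. by rewrite eqz_nat -lt0n expn_gt0 prime_gt0. Qed.

Lemma has_val_exp k : has_val k (p ^ k)%N%:Z.
Proof.
exists 1; first by rewrite mulr1.
by rewrite dvdzE /= dvdn1 neq_ltn (prime_gt1 p_prime) orbT.
Qed.

Lemma has_valM k l y z : has_val k y -> has_val l z -> has_val (k + l) (y * z).
Proof.
move=> [y' -> ny] [z' -> nz]; exists (y' * z'); first by rewrite expnD PoszM; ring.
by move: ny nz; rewrite !dvdzE abszM /= Euclid_dvdM // negb_or => -> ->.
Qed.

Lemma has_valN k y : has_val k y -> has_val k (- y).
Proof. by move=> [y' -> ny]; exists (- y'); rewrite ?mulrN ?rpredN. Qed.

Lemma has_val_dvd e k y : (e <= k)%N -> has_val k y -> ((p ^ e)%N%:Z %| y)%Z.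
Proof. by move=> le_ek [y' -> _]; rewrite dvdz_mulr // dvdzE /= dvdn_exp2l. Qed.

Lemma has_val_ndvd k y : has_val k y -> ~~ ((p ^ k.+1)%N%:Z %| y)%Z.
Proof.
by move=> [y' -> ny]; rewrite expnSr PoszM dvdz_mul2l // expz_neq0.
Qed.

Lemma has_val_of_dvd k y :
  ((p ^ k)%N%:Z %| y)%Z -> ~~ ((p ^ k.+1)%N%:Z %| y)%Z -> has_val k y.
Proof.
move=> dvd_k ndvd_k1; exists (y %/ (p ^ k)%N%:Z)%Z; first by rewrite mulrC divzK.
apply: contraNN ndvd_k1 => dvd_q.
by rewrite -(divzK dvd_k) mulrC expnSr PoszM dvdz_mul2l // expz_neq0.
Qed.

Lemma has_val_addr_ndvd e t s :
  has_val e t -> ((p ^ e.+1)%N%:Z %| s)%Z -> ~~ ((p ^ e.+1)%N%:Z %| t + s)%Z.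
Proof.
move=> vt dvd_s; apply/negP => dvd_ts; move/negP: (has_val_ndvd vt); apply.
by rewrite -(addrK s t) rpredB.
Qed.

(* Ultrametric inequality: the least valuation among the terms is attained twice. *)
Lemma has_val_sum3_min e f g n t s r :
  has_val e t -> has_val f s -> has_val g r ->
  (e < n)%N -> (f < n)%N -> (g < n)%N -> ((p ^ n)%N%:Z %| t + s + r)%Z ->
  ~ [\/ (e < f)%N /\ (e < g)%N, (f < e)%N /\ (f < g)%N | (g < e)%N /\ (g < f)%N].
Proof.
move=> vt vs vr lt_en lt_fn lt_gn dvd_n.
have dvd_sum m : (m < n)%N -> ((p ^ m.+1)%N%:Z %| t + s + r)%Z.
  by move=> lt_mn; apply: dvdz_trans dvd_n; rewrite dvdzE /= dvdn_exp2l.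
case=> [[lt_ef lt_eg]|[lt_fe lt_fg]|[lt_ge lt_gf]].
- apply/negP: (dvd_sum e lt_en); rewrite -addrA.
  by apply: has_val_addr_ndvd; rewrite // rpredD // (has_val_dvd _ vs, has_val_dvd _ vr).
- apply/negP: (dvd_sum f lt_fn); rewrite (addrC t) -addrA.
  by apply: has_val_addr_ndvd; rewrite // rpredD // (has_val_dvd _ vt, has_val_dvd _ vr).
- apply/negP: (dvd_sum g lt_gn); rewrite addrC.
  by apply: has_val_addr_ndvd; rewrite // rpredD // (has_val_dvd _ vt, has_val_dvd _ vs).
Qed.

End ExactValuation.

Lemma is3adic_dvd_sub (x : Z3) m n :
  is3adic x -> (m <= n)%N -> (p3 m %| x n - x m)%Z.
Proof.
move=> x3 /subnKC <-; elim: (n - m)%N => [|k IHk]; first by rewrite addn0 subrr.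
have step : (p3 m %| x (m + k).+1 - x (m + k)%N)%Z.
  apply: dvdz_trans (_ : p3 (m + k) %| _)%Z; first by rewrite dvdzE /= dvdn_exp2l ?leq_addr.
  by rewrite -eqz_mod_dvd x3.
by rewrite addnS -(subrKA (x (m + k)%N)) rpredD.
Qed.

Lemma z3val_has_val (x : Z3) k n :
  is3adic x -> z3val x k -> (k < n)%N -> has_val 3 k (x n).
Proof.
move=> x3 [dvd_k ndvd_k1] lt_kn; apply: has_val_of_dvd => //.
- by rewrite -(subrK (x k) (x n)) rpredD // is3adic_dvd_sub // ltnW.
- apply: contraNN ndvd_k1 => dvd_k1.
  by rewrite -[x k.+1](subKr (x n)) rpredB ?is3adic_dvd_sub.
Qed.

(* The hypothesis on X, A, B is level n of the equation x^3 + a x = b for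
   x = X/3^dx, a = A/3^da, b = B/3^db after clearing denominators. *)
Lemma cubic_level_min_twice (dx da db va vb n : nat) (X A B : int) :
  has_val 3 dx X -> has_val 3 va A -> has_val 3 vb B ->
  (4 * dx + da + db + va + vb < n)%N ->
  (p3 db * (p3 (da + dx) * (X * (X * X)) + p3 (dx + (dx + dx)) * (A * X))
     == p3 (dx + (dx + dx) + (da + dx)) * B %[mod p3 n])%Z ->
  let ga := va%:Z - da%:Z in let gb := vb%:Z - db%:Z in
  ~ [\/ 0 < ga /\ 0 < gb, ga < 0 /\ ga < gb | gb < 0 /\ gb < ga].
Proof.
have p3_prime : prime 3 by [].
move=> vX vA vB lt_n; rewrite eqz_mod_dvd mulrDr => dvd_n ga gb min_once.
have vT : has_val 3 (db + da + 4 * dx) (p3 db * (p3 (da + dx) * (X * (X * X)))).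
  rewrite (_ : db + da + 4 * dx = db + ((da + dx) + (dx + (dx + dx))))%N; last by lia.
  by do !apply: has_valM => //; apply: has_val_exp.
have vS : has_val 3 (db + va + 4 * dx) (p3 db * (p3 (dx + (dx + dx)) * (A * X))).
  rewrite (_ : db + va + 4 * dx = db + ((dx + (dx + dx)) + (va + dx)))%N; last by lia.
  by do !apply: has_valM => //; apply: has_val_exp.
have vR : has_val 3 (da + vb + 4 * dx) (- (p3 (dx + (dx + dx) + (da + dx)) * B)).
  rewrite (_ : da + vb + 4 * dx = dx + (dx + dx) + (da + dx) + vb)%N; last by lia.
  by apply/has_valN; do !apply: has_valM => //; apply: has_val_exp.
apply: (has_val_sum3_min p3_prime vT vS vR _ _ _ dvd_n); try lia.
by case: min_once => -[]; rewrite /ga /gb => ? ?; [apply: Or31 | apply: Or32 | apply: Or33]; lia.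
Qed.

Theorem proposition3p1 (a b : Q3) (ga gb : int)
  (Ha : isQ3 a) (Hb : isQ3 b)
  (Hga : q3val a ga) (Hgb : q3val b gb)
  (Hcases : (ga = 0 /\ gb < 0) \/ (0 < ga /\ 0 < gb) \/ (0 < ga /\ gb < 0) \/
                (ga < 0 /\ gb = 0) \/ (ga < 0 /\ 0 < gb)) :
  ~ (exists x : Q3,
        q3unit x /\ q3eq (q3add (q3mul x (q3mul x x)) (q3mul a x)) b).
Proof.
move=> [[dx X] [[HX [k [HXk /= Ek]]] Heq]].
case: Hga Hgb Hcases => va [HAva ->] [vb [HBvb ->]].
case: a Ha HAva Heq => da A /= HA HAva; case: b Hb HBvb => db B /= HB HBvb Heq Hcases.
have {}Ek : k = dx by lia.
subst k; set n := (4 * dx + da + db + va + vb).+1.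
apply: (cubic_level_min_twice (z3val_has_val HX HXk _) (z3val_has_val HA HAva _)
                               (z3val_has_val HB HBvb _) (ltnSn _) (Heq n)); try lia.
by case: Hcases => [|[|[|[|]]]] [? ?] /=;
  [apply: Or33 | apply: Or31 | apply: Or33 | apply: Or32 | apply: Or32]; lia.
Qed.
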